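(* Let $\alpha\in\mathbb N$. Define the polynomials $$p_n^{(\alpha)}(x)=\binom{\alpha+n-1}{n}_{\mathbb F}\,p_n(x\phi;q^{\alpha-1},1;q),\quad n\ge 0.$$ Then $$p_n^{(\alpha)}(x)=\sum_{k=0}^n(-1)^{kn-\binom{k}{2}}\binom{n}{k}_{\mathbb F}\binom{\alpha+n+k-1}{n}_{\mathbb F}x^k,$$ and $$\int p_n^{(\alpha)}(x)p_m^{(\alpha)}(x)\,d\mu_\alpha(x)=\delta_{n,m}(-1)^{\alpha n}\frac{F_\alpha}{F_{\alpha+2n}},$$ so that the polynomials $$P_n^{(\alpha)}(x)=\sqrt{(-1)^{\alpha n}F_{\alpha+2n}/F_\alpha}\;p_n^{(\alpha)}(x)$$ satisfy $\int P_n^{(\alpha)}P_m^{(\alpha)}\,d\mu_\alpha=\delta_{n,m}$, i.e. they are the corresponding orthonormal polynomials.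
   Context: $F_n$ are the Fibonacci numbers ($F_0=0,F_1=1,F_{n+1}=F_n+F_{n-1}$). $\phi=(1+\sqrt5)/2$, $q=(1-\sqrt5)/(1+\sqrt5)$. The Fibonomial coefficients are $\binom{n}{k}_{\mathbb F}=\prod_{i=1}^k F_{n-i+1}/F_i$ for $0\le k\le n$ (empty product $=1$). With $(a;q)_k=\prod_{j=0}^{k-1}(1-aq^j)$, the little $q$-Jacobi polynomials are $$p_n(x;a,b;q)=\sum_{k=0}^n\frac{(q^{-n};q)_k(abq^{n+1};q)_k}{(q;q)_k(aq;q)_k}(xq)^k.$$ $\mu_\alpha=(1-q^\alpha)\sum_{k=0}^\infty q^{\alpha k}\delta_{q^k/\phi}$, a real-valued measure of total mass 1 ($\delta_a$ the unit point mass at $a$). The square root of a negative number is the principal one ($\sqrt{-t}=i\sqrt t$ for $t>0$). *)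

From Stdlib Require Import Reals Lra Lia.
From Coquelicot Require Import Coquelicot.
Open Scope R_scope.

Fixpoint fib (n : nat) : nat :=
  match n with
  | O => O
  | S O => 1%nat
  | S ((S m) as p) => (fib p + fib m)%nat
  end.

Definition F (n : nat) : R := INR (fib n).

Fixpoint fibonomial (n k : nat) : R :=
  match k with
  | O => 1
  | S j => fibonomial n j * (F (n - j) / F (S j))
  end.

Definition phi : R := (1 + sqrt 5) / 2.
Definition q : R := (1 - sqrt 5) / (1 + sqrt 5).

Fixpoint qpoch (a qq : R) (k : nat) : R :=
  match k with
  | O => 1
  | S j => qpoch a qq j * (1 - a * qq ^ j)
  end.

Definition little_qjacobi (n : nat) (x a b qq : R) : R :=
  sum_f_R0 (fun k => qpoch (/ qq ^ n) qq k * qpoch (a * b * qq ^ (S n)) qq k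
                     / (qpoch qq qq k * qpoch (a * qq) qq k) * (x * qq) ^ k) n.

Definition palpha (alpha n : nat) (x : R) : R :=
  fibonomial (alpha + n - 1) n * little_qjacobi n (x * phi) (q ^ (alpha - 1)) 1 q.

(* weights of mu_alpha = (1 - q^alpha) sum_k q^(alpha k) delta_{q^k/phi} *)
Definition mu_weight (alpha k : nat) : R := (1 - q ^ alpha) * (q ^ alpha) ^ k.
Definition mu_point (k : nat) : R := q ^ k / phi.

Definition is_mu_integral (alpha : nat) (f : R -> R) (v : R) : Prop :=
  is_series (fun k => mu_weight alpha k * f (mu_point k)) v.

Definition is_mu_integralC (alpha : nat) (f : R -> C) (v : C) : Prop :=
  @is_series C_AbsRing C_NormedModule
    (fun k => Cmult (RtoC (mu_weight alpha k)) (f (mu_point k))) v.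

Definition csqrt_principal (t : R) : C :=
  if Rle_dec 0 t then (sqrt t, 0) else (0, sqrt (- t)).

Definition Palpha (alpha n : nat) (x : R) : C :=
  Cmult (csqrt_principal ((-1) ^ (alpha * n) * F (alpha + 2 * n) / F alpha))
        (RtoC (palpha alpha n x)).

From Stdlib Require Import Reals Lra Lia.
From Coquelicot Require Import Coquelicot.
Open Scope R_scope.

(* Since [q = -1/phi^2], Binet's formula reads [F_(m+1) = phi^m (1 - q^(m+1)) / (1 - q)]:
   Fibonomials are q-binomial coefficients up to powers of [phi], and [p_n^(alpha)] is a little
   q-Jacobi polynomial in [x phi q]. The explicit expansion follows by comparing the ratios of
   consecutive coefficients.
   The measure [mu_alpha] lives on the points [q^s / phi] with geometric weights, so the moment
   [int x^l p_n dmu_alpha] is a finite sum [sum_k c_k q^k / (1 - q^(alpha + l + k))]. Splitting off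
   the pole, it becomes a partial fraction identity for the weights [(q^-n;q)_k q^k / (q;q)_k] plus
   a sum of these weights against a polynomial of degree [< n] in [q^k], which vanishes by the
   q-binomial theorem. The moment carries the factor [(q^-l;q)_n], zero for [l < n]: this gives
   orthogonality, and the moment at [l = n] gives the norm. *)

Lemma one_minus_neq0 c : Rabs c < 1 -> 1 - c <> 0.
Proof. intros Hc E. replace c with 1 in Hc by lra. rewrite Rabs_R1 in Hc. lra. Qed.

Lemma Rabs_pow_le1 r k : Rabs r < 1 -> Rabs (r ^ k) <= 1.
Proof.
  intro Hr. rewrite <- RPow_abs, <- (pow1 k).
  apply pow_incr. split; [apply Rabs_pos | lra].
Qed.

Lemma Rabs_pow_succ_lt1 r k : Rabs r < 1 -> Rabs (r ^ S k) < 1.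
Proof.
  intro Hr. rewrite <- RPow_abs.
  apply pow_lt_1_compat; [split; [apply Rabs_pos | exact Hr] | lia].
Qed.

Lemma Rabs_mul_pow_lt1 a r l : Rabs a < 1 -> Rabs r < 1 -> Rabs (a * r ^ l) < 1.
Proof.
  intros Ha Hr. rewrite Rabs_mult.
  pose proof (Rabs_pow_le1 r l Hr). pose proof (Rabs_pos a). pose proof (Rabs_pos (r ^ l)).
  nra.
Qed.

Lemma sum_f_R0_last (f : nat -> R) n : (forall l, (l < n)%nat -> f l = 0) -> sum_f_R0 f n = f n.
Proof.
  intro H. destruct n as [|n]; [reflexivity |]. simpl.
  rewrite sum_eq_R0; [ring |]. intros l Hl. apply H. lia.
Qed.

Inductive poly_deg_le : nat -> (R -> R) -> Prop :=
  | poly_deg_le_const d a (f : R -> R) : (forall z, f z = a) -> poly_deg_le d f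
  | poly_deg_le_horner d a (g f : R -> R) :
      poly_deg_le d g -> (forall z, f z = a + z * g z) -> poly_deg_le (S d) f.

Lemma poly_deg_le_ext d f g : poly_deg_le d f -> (forall z, g z = f z) -> poly_deg_le d g.
Proof.
  intros [d' a f' Hf | d' a h f' Hh Hf] E.
  - apply (poly_deg_le_const _ a). intro z. rewrite E. apply Hf.
  - apply (poly_deg_le_horner _ a h); [exact Hh |]. intro z. rewrite E. apply Hf.
Qed.

Lemma poly_deg_le_add_const d f b : poly_deg_le d f -> poly_deg_le d (fun z => f z + b).
Proof.
  intros [d' a f' Hf | d' a g f' Hg Hf].
  - apply (poly_deg_le_const _ (a + b)). intro z. rewrite Hf. reflexivity.
  - apply (poly_deg_le_horner _ (a + b) g); [exact Hg |]. intro z. rewrite Hf. ring.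
Qed.

Lemma poly_deg_le_mul_affine d f c :
  poly_deg_le d f -> poly_deg_le (S d) (fun z => f z * (1 - c * z)).
Proof.
  intro H. revert c. induction H as [d a f Hf | d a g f Hg IH Hf]; intro c.
  - apply (poly_deg_le_horner _ a (fun _ => - c * a)).
    + apply (poly_deg_le_const _ (- c * a)). reflexivity.
    + intro z. rewrite Hf. ring.
  - apply (poly_deg_le_horner _ a (fun z => g z * (1 - c * z) + - c * a)).
    + apply poly_deg_le_add_const, IH.
    + intro z. rewrite Hf. ring.
Qed.

Lemma poly_deg_le_factor d f c : c <> 0 -> poly_deg_le d f ->
  exists g, poly_deg_le (pred d) g /\ forall z, f z = f (/ c) + (1 - c * z) * g z.
Proof.
  intros Hc H. induction H as [d a f Hf | d a g f Hg IH Hf].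
  - exists (fun _ => 0). split; [now apply (poly_deg_le_const _ 0) |].
    intro z. rewrite !Hf. ring.
  - destruct d as [|d].
    + inversion Hg as [d' b g' Hb | ]; subst.
      exists (fun _ => - b / c). split; [now apply (poly_deg_le_const _ (- b / c)) |].
      intro z. rewrite !Hf, !Hb. field. exact Hc.
    + destruct IH as [h [Hh Eh]].
      exists (fun z => - g (/ c) / c + z * h z). split.
      * now apply (poly_deg_le_horner _ (- g (/ c) / c) h).
      * intro z. rewrite !Hf, (Eh z). field. exact Hc.
Qed.

(** * q-Pochhammer symbols and q-binomial sums *)

Lemma qpoch_add a qq n k : qpoch a qq (n + k) = qpoch a qq n * qpoch (a * qq ^ n) qq k.
Proof.
  induction k as [|k IH].
  - rewrite Nat.add_0_r. simpl. ring.
  - rewrite Nat.add_succ_r. simpl. rewrite IH, pow_add. ring.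
Qed.

Lemma qpoch_succ_l a qq n : qpoch a qq (S n) = (1 - a) * qpoch (a * qq) qq n.
Proof. rewrite <- Nat.add_1_l, qpoch_add, pow_1. simpl. ring. Qed.

Lemma qpoch_eq0 a qq n l : (l < n)%nat -> a * qq ^ l = 1 -> qpoch a qq n = 0.
Proof.
  intros Hl Ha. induction n as [|n IH]; [lia |]. simpl.
  destruct (Nat.eq_dec l n) as [-> | Hne].
  - rewrite Ha. ring.
  - rewrite IH by lia. ring.
Qed.

Section QAnalysis.

Variable qq : R.
Hypothesis qq_neq0 : qq <> 0.
Hypothesis Rabs_qq_lt1 : Rabs qq < 1.

Lemma qpoch_neq0 a n : Rabs a < 1 -> qpoch a qq n <> 0.
Proof.
  intro Ha. induction n as [|n IH]; simpl; [lra |].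
  apply Rmult_integral_contrapositive. split; [exact IH |].
  now apply one_minus_neq0, Rabs_mul_pow_lt1.
Qed.

Let qpoch_qq_neq0 n : qpoch qq qq n <> 0 := qpoch_neq0 qq n Rabs_qq_lt1.
Let pow_qq_neq0 n : qq ^ n <> 0 := pow_nonzero qq n qq_neq0.

(* The q-binomial coefficient [n k]_q times [(-1)^k q^(k(k+1)/2 - nk)]. *)
Definition qbinom_weight (n k : nat) : R := qpoch (/ qq ^ n) qq k * qq ^ k / qpoch qq qq k.

Lemma qbinom_weight_0 n : qbinom_weight n 0 = 1.
Proof. unfold qbinom_weight. simpl. field. Qed.

Lemma qbinom_weight_succ_diag n : qbinom_weight n (S n) = 0.
Proof.
  unfold qbinom_weight. rewrite (qpoch_eq0 _ _ _ n); [unfold Rdiv; ring | lia |].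
  field. apply pow_qq_neq0.
Qed.

Lemma qbinom_weight_succ n j :
  qbinom_weight (S n) (S j) = qbinom_weight n (S j) - / qq ^ n * qbinom_weight n j.
Proof.
  unfold qbinom_weight. rewrite (qpoch_succ_l (/ qq ^ S n)).
  replace (/ qq ^ S n * qq) with (/ qq ^ n) by (simpl; field; auto).
  pose proof (qpoch_qq_neq0 j). pose proof (one_minus_neq0 _ (Rabs_pow_succ_lt1 qq j Rabs_qq_lt1)).
  pose proof (pow_qq_neq0 n).
  simpl in *. field. auto.
Qed.

Lemma sum_qbinom_weight_succ n (g : nat -> R) :
  sum_f_R0 (fun k => qbinom_weight (S n) k * g k) (S n) =
  sum_f_R0 (fun k => qbinom_weight n k * g k) n
  - / qq ^ n * sum_f_R0 (fun k => qbinom_weight n k * g (S k)) n.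
Proof.
  rewrite decomp_sum by lia. simpl pred.
  rewrite (sum_eq _ (fun i => qbinom_weight n (S i) * g (S i)
                               + qbinom_weight n i * g (S i) * (- / qq ^ n)))
    by (intros i _; rewrite qbinom_weight_succ; ring).
  rewrite sum_plus, <- scal_sum.
  replace (sum_f_R0 (fun k => qbinom_weight n k * g k) n)
    with (sum_f_R0 (fun k => qbinom_weight n k * g k) (S n))
    by (simpl; rewrite qbinom_weight_succ_diag; ring).
  rewrite (decomp_sum _ (S n)) by lia. simpl pred.
  rewrite !qbinom_weight_0. ring.
Qed.

Lemma q_binomial n z :
  sum_f_R0 (fun k => qbinom_weight n k * z ^ k) n = qpoch z (/ qq) n.
Proof.
  revert z. induction n as [|n IH]; intro z.
  - simpl. rewrite qbinom_weight_0. ring.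
  - rewrite sum_qbinom_weight_succ, IH.
    rewrite (sum_eq _ (fun k => qbinom_weight n k * z ^ k * z)) by (intros; simpl; ring).
    rewrite <- scal_sum, IH. simpl. rewrite pow_inv. ring.
Qed.

Lemma sum_qbinom_weight_pow n m : (m < n)%nat ->
  sum_f_R0 (fun k => qbinom_weight n k * (qq ^ m) ^ k) n = 0.
Proof.
  intro Hm. rewrite q_binomial. apply (qpoch_eq0 _ _ _ m Hm).
  rewrite pow_inv. field. apply pow_qq_neq0.
Qed.

Lemma sum_qbinom_weight_partial_fraction n c : Rabs c < 1 ->
  sum_f_R0 (fun k => qbinom_weight n k / (1 - c * qq ^ k)) n
  = c ^ n * qpoch qq qq n / qpoch c qq (S n).
Proof.
  revert c. induction n as [|n IH]; intros c Hc.
  - pose proof (one_minus_neq0 c Hc). simpl. rewrite qbinom_weight_0, Rmult_1_r. field. auto.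
  - assert (Hcq : Rabs (c * qq) < 1) by (rewrite <- (pow_1 qq); now apply Rabs_mul_pow_lt1).
    pose proof (IH c Hc) as I1. pose proof (IH (c * qq) Hcq) as I2.
    unfold Rdiv in I1, I2 |- *. rewrite sum_qbinom_weight_succ, I1.
    rewrite (sum_eq _ (fun k => qbinom_weight n k * / (1 - c * qq * qq ^ k)))
      by (intros; simpl; rewrite Rmult_assoc; reflexivity).
    rewrite I2.
    assert (E1 : qpoch c qq (S (S n)) = qpoch c qq (S n) * (1 - c * qq ^ S n)) by reflexivity.
    assert (E2 : qpoch c qq (S (S n)) = (1 - c) * qpoch (c * qq) qq (S n)) by apply qpoch_succ_l.
    pose proof (qpoch_neq0 c (S (S n)) Hc) as N2.
    assert (N1 : qpoch c qq (S n) <> 0) by (intro Z; apply N2; rewrite E1, Z; ring).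
    assert (Nq : qpoch (c * qq) qq (S n) <> 0) by (intro Z; apply N2; rewrite E2, Z; ring).
    assert (N1c : 1 - c <> 0) by (intro Z; apply N2; rewrite E2, Z; ring).
    assert (N1n : 1 - c * qq ^ S n <> 0) by (intro Z; apply N2; rewrite E1, Z; ring).
    replace (/ qpoch c qq (S n)) with ((1 - c * qq ^ S n) / qpoch c qq (S (S n)))
      by (rewrite E1; field; auto).
    replace (/ qpoch (c * qq) qq (S n)) with ((1 - c) / qpoch c qq (S (S n)))
      by (rewrite E2; field; auto).
    change (qpoch qq qq (S n)) with (qpoch qq qq n * (1 - qq * qq ^ n)).
    rewrite Rpow_mult_distr. simpl pow. field. repeat split; auto.
Qed.

Lemma sum_qbinom_weight_poly n d g : poly_deg_le d g -> forall m, (d + m < n)%nat ->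
  sum_f_R0 (fun k => qbinom_weight n k * ((qq ^ k) ^ m * g (qq ^ k))) n = 0.
Proof.
  induction 1 as [d a g Hg | d a h g Hh IH Hg]; intros m Hm.
  - rewrite (sum_eq _ (fun k => qbinom_weight n k * (qq ^ m) ^ k * a)).
    + rewrite <- scal_sum, sum_qbinom_weight_pow by lia. ring.
    + intros k _. rewrite Hg, <- !pow_mult, Nat.mul_comm. ring.
  - rewrite (sum_eq _ (fun k => qbinom_weight n k * (qq ^ m) ^ k * a
                                + qbinom_weight n k * ((qq ^ k) ^ S m * h (qq ^ k)))).
    + rewrite sum_plus, <- scal_sum, sum_qbinom_weight_pow, IH by lia. ring.
    + intros k _. rewrite Hg, <- !pow_mult.
      replace (k * S m)%nat with (m * k + k)%nat by lia. rewrite pow_add, (Nat.mul_comm k m). ring.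
Qed.

Lemma poly_deg_le_qpoch n u : poly_deg_le n (fun z => qpoch (u * z) qq n).
Proof.
  induction n as [|n IH].
  - now apply (poly_deg_le_const _ 1).
  - apply (poly_deg_le_ext _ _ _ (poly_deg_le_mul_affine _ _ (u * qq ^ n) IH)).
    intro z. simpl. f_equal. ring.
Qed.

Definition lqj_coef (u : R) (n k : nat) : R :=
  qpoch (/ qq ^ n) qq k * qpoch (u * qq ^ n) qq k / (qpoch qq qq k * qpoch u qq k).

Lemma little_qjacobi_b1 n y a :
  little_qjacobi n y a 1 qq = sum_f_R0 (fun k => lqj_coef (a * qq) n k * (y * qq) ^ k) n.
Proof.
  apply sum_eq. intros k _. unfold lqj_coef.
  replace (a * 1 * qq ^ S n) with (a * qq * qq ^ n) by (simpl; ring). reflexivity.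
Qed.

Lemma lqj_coef_succ u n k : Rabs u < 1 ->
  lqj_coef u n (S k) = lqj_coef u n k
    * ((1 - / qq ^ n * qq ^ k) * (1 - u * qq ^ n * qq ^ k)
       / ((1 - qq * qq ^ k) * (1 - u * qq ^ k))).
Proof.
  intro Hu. unfold lqj_coef. simpl qpoch.
  pose proof (qpoch_qq_neq0 k). pose proof (qpoch_neq0 u k Hu).
  pose proof (one_minus_neq0 _ (Rabs_pow_succ_lt1 qq k Rabs_qq_lt1)).
  pose proof (one_minus_neq0 _ (Rabs_mul_pow_lt1 u qq k Hu Rabs_qq_lt1)).
  simpl in *. field. repeat split; auto.
Qed.

Lemma lqj_coef_qbinom_weight u n k : Rabs u < 1 ->
  lqj_coef u n k * qq ^ k = qbinom_weight n k * qpoch (u * qq ^ k) qq n / qpoch u qq n.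
Proof.
  intro Hu. unfold lqj_coef, qbinom_weight.
  assert (E : qpoch (u * qq ^ n) qq k * qpoch u qq n = qpoch (u * qq ^ k) qq n * qpoch u qq k).
  { rewrite Rmult_comm, <- qpoch_add, Nat.add_comm, qpoch_add. ring. }
  pose proof (qpoch_neq0 u n Hu). pose proof (qpoch_neq0 u k Hu). pose proof (qpoch_qq_neq0 k).
  apply (Rmult_eq_reg_r (qpoch u qq n * qpoch u qq k * qpoch qq qq k));
    [| repeat apply Rmult_integral_contrapositive; auto].
  field_simplify; auto.
  transitivity (qpoch (/ qq ^ n) qq k * qq ^ k * (qpoch (u * qq ^ n) qq k * qpoch u qq n));
    [ring |].
  rewrite E. ring.
Qed.

(* Write [(u z;q)_n = (q^-l;q)_n + (1 - u q^l z) g(z)]: the constant part gives the partial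
   fraction sum, and [g], of degree [< n], is annihilated by the weights. *)
Lemma sum_lqj_coef_moment u n l : u <> 0 -> Rabs u < 1 ->
  sum_f_R0 (fun k => lqj_coef u n k * qq ^ k / (1 - u * qq ^ l * qq ^ k)) n
  = qpoch (/ qq ^ l) qq n / qpoch u qq n
    * ((u * qq ^ l) ^ n * qpoch qq qq n / qpoch (u * qq ^ l) qq (S n)).
Proof.
  intros Hu0 Hu. set (c := u * qq ^ l).
  assert (Hc : Rabs c < 1) by now apply Rabs_mul_pow_lt1.
  pose proof (one_minus_neq0 c Hc) as Nc.
  destruct n as [|n].
  - unfold lqj_coef. simpl. rewrite Rmult_1_r. field. auto.
  - assert (Hc0 : c <> 0) by (apply Rmult_integral_contrapositive; auto).
    destruct (poly_deg_le_factor _ _ c Hc0 (poly_deg_le_qpoch (S n) u)) as [g [Hg Eg]].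
    replace (u * / c) with (/ qq ^ l) in Eg by (unfold c; field; auto).
    pose proof (qpoch_neq0 u (S n) Hu).
    rewrite (sum_eq _ (fun k => qbinom_weight (S n) k / (1 - c * qq ^ k)
                                  * (qpoch (/ qq ^ l) qq (S n) / qpoch u qq (S n))
                                + qbinom_weight (S n) k * ((qq ^ k) ^ 0 * g (qq ^ k))
                                  * / qpoch u qq (S n))).
    + rewrite sum_plus, <- !scal_sum, sum_qbinom_weight_partial_fraction by auto.
      rewrite (sum_qbinom_weight_poly _ _ _ Hg) by (simpl; lia). ring.
    + intros k _. unfold Rdiv at 1. rewrite lqj_coef_qbinom_weight, (Eg (qq ^ k)) by exact Hu.
      assert (1 - c * qq ^ k <> 0) by now apply one_minus_neq0, Rabs_mul_pow_lt1.
      fold c. rewrite pow_O. field. auto.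
Qed.

Lemma qpoch_inv_pow_sq n :
  qpoch (/ qq ^ n) qq n ^ 2 * qq ^ (n * S n) = qpoch qq qq n ^ 2.
Proof.
  induction n as [|n IH]; [simpl; ring |].
  rewrite qpoch_succ_l.
  replace (/ qq ^ S n * qq) with (/ qq ^ n) by (simpl; field; auto).
  replace (S n * S (S n))%nat with (n * S n + S n + S n)%nat by lia.
  rewrite !pow_add. simpl qpoch at 2.
  rewrite (Rpow_mult_distr (qpoch qq qq n)), <- IH.
  pose proof (pow_qq_neq0 (S n)). simpl pow. simpl pow in H. field. auto.
Qed.

End QAnalysis.

(** * The golden ratio and Fibonomials *)

Lemma sqrt5_sq : sqrt 5 * sqrt 5 = 5.
Proof. apply sqrt_sqrt. lra. Qed.

Lemma sqrt5_gt2 : 2 < sqrt 5.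
Proof. rewrite <- (sqrt_square 2) by lra. apply sqrt_lt_1_alt. lra. Qed.

Lemma phi_gt1 : 1 < phi.
Proof. unfold phi. pose proof sqrt5_gt2. lra. Qed.

Lemma phi_neq0 : phi <> 0.
Proof. pose proof phi_gt1. lra. Qed.

Lemma phi_sq : phi * phi = phi + 1.
Proof. unfold phi. pose proof sqrt5_sq. nra. Qed.

Lemma q_mul_phi_sq : q * (phi * phi) = -1.
Proof. unfold q, phi. pose proof sqrt5_sq. pose proof sqrt5_gt2. field_simplify; nra. Qed.

Lemma q_eq_inv_phi_sq : q = - / (phi * phi).
Proof. pose proof q_mul_phi_sq. pose proof phi_neq0. field_simplify_eq; [nra | auto]. Qed.

Lemma phi_q_sq : phi * q * (phi * q) = phi * q + 1.
Proof. pose proof q_mul_phi_sq. pose proof phi_sq. nra. Qed.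

Lemma q_neg : q < 0.
Proof. pose proof q_mul_phi_sq. pose proof phi_gt1. nra. Qed.

Lemma q_neq0 : q <> 0.
Proof. pose proof q_neg. lra. Qed.

Lemma Rabs_q_lt1 : Rabs q < 1.
Proof.
  pose proof q_mul_phi_sq. pose proof phi_gt1. pose proof q_neg.
  rewrite Rabs_left by lra. nra.
Qed.

Lemma one_minus_q_neq0 : 1 - q <> 0.
Proof. pose proof q_neg. lra. Qed.

Lemma qpoch_q_neq0 a n : Rabs a < 1 -> qpoch a q n <> 0.
Proof. exact (qpoch_neq0 q Rabs_q_lt1 a n). Qed.

Lemma pow_succ2_of_golden x n : x * x = x + 1 -> x ^ S (S n) = x ^ S n + x ^ n.
Proof. intro Hx. simpl. rewrite <- Rmult_assoc, Hx. ring. Qed.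

(* Binet's formula, with [phi q = (1 - sqrt 5) / 2] the conjugate root. *)
Lemma F_binet n : F n * (phi * (1 - q)) = phi ^ n - (phi * q) ^ n.
Proof.
  enough (H : forall n, F n * (phi * (1 - q)) = phi ^ n - (phi * q) ^ n
                     /\ F (S n) * (phi * (1 - q)) = phi ^ S n - (phi * q) ^ S n) by apply H.
  clear n. intro n. induction n as [|n [IH1 IH2]]; split.
  - unfold F. simpl. ring.
  - unfold F. simpl. ring.
  - exact IH2.
  - unfold F in *. change (fib (S (S n))) with (fib (S n) + fib n)%nat.
    rewrite plus_INR, Rmult_plus_distr_r, IH1, IH2,
      (pow_succ2_of_golden _ _ phi_sq), (pow_succ2_of_golden _ _ phi_q_sq).
    ring.
Qed.

Lemma F_succ m : F (S m) = phi ^ m * (1 - q ^ S m) / (1 - q).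
Proof.
  pose proof (F_binet (S m)) as H. rewrite Rpow_mult_distr in H.
  pose proof one_minus_q_neq0. pose proof phi_neq0.
  apply (Rmult_eq_reg_r (phi * (1 - q))); [| now apply Rmult_integral_contrapositive].
  rewrite H. simpl. field. auto.
Qed.

Lemma F_succ_neq0 m : F (S m) <> 0.
Proof.
  rewrite F_succ. pose proof one_minus_q_neq0.
  pose proof (pow_nonzero _ m phi_neq0).
  pose proof (one_minus_neq0 _ (Rabs_pow_succ_lt1 q m Rabs_q_lt1)).
  unfold Rdiv. repeat apply Rmult_integral_contrapositive; split; auto. now apply Rinv_neq_0_compat.
Qed.

Lemma fibonomial_qpoch n d :
  fibonomial (n + d) n * qpoch q q n = phi ^ (n * d) * qpoch (q ^ S d) q n.
Proof.
  revert d. induction n as [|n IH]; intro d; [simpl; ring |].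
  replace (S n + d)%nat with (n + S d)%nat by lia.
  simpl fibonomial. simpl qpoch at 1.
  replace (n + S d - n)%nat with (S d) by lia.
  rewrite qpoch_succ_l.
  replace (q ^ S d * q) with (q ^ S (S d)) by (simpl; ring).
  pose proof (qpoch_q_neq0 q n Rabs_q_lt1).
  replace (fibonomial (n + S d) n)
    with (phi ^ (n * S d) * qpoch (q ^ S (S d)) q n / qpoch q q n)
    by (rewrite <- IH; field; auto).
  replace (n * S d)%nat with (S n * d + n - d)%nat by nia.
  pose proof (pow_nonzero _ d phi_neq0).
  replace (phi ^ (S n * d + n - d)) with (phi ^ (S n * d) * phi ^ n / phi ^ d)
    by (apply (Rmult_eq_reg_r (phi ^ d)); auto; field_simplify; auto;
        rewrite <- !pow_add; f_equal; nia).
  rewrite !F_succ. pose proof one_minus_q_neq0.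
  pose proof (one_minus_neq0 _ (Rabs_pow_succ_lt1 q n Rabs_q_lt1)).
  pose proof (pow_nonzero _ n phi_neq0).
  simpl in *. field. repeat split; auto.
Qed.

Lemma fibonomial_shift n d :
  fibonomial (n + S d) n = fibonomial (n + d) n * (F (n + S d) / F (S d)).
Proof.
  pose proof (qpoch_q_neq0 q n Rabs_q_lt1).
  pose proof (one_minus_neq0 _ (Rabs_pow_succ_lt1 q d Rabs_q_lt1)).
  replace (fibonomial (n + S d) n) with (phi ^ (n * S d) * qpoch (q ^ S (S d)) q n / qpoch q q n)
    by (rewrite <- fibonomial_qpoch; field; auto).
  replace (fibonomial (n + d) n) with (phi ^ (n * d) * qpoch (q ^ S d) q n / qpoch q q n)
    by (rewrite <- fibonomial_qpoch; field; auto).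
  assert (E : qpoch (q ^ S d) q n * (1 - q ^ S d * q ^ n)
              = (1 - q ^ S d) * qpoch (q ^ S (S d)) q n).
  { change (qpoch (q ^ S d) q n * (1 - q ^ S d * q ^ n)) with (qpoch (q ^ S d) q (S n)).
    rewrite qpoch_succ_l. do 2 f_equal. simpl. ring. }
  replace (qpoch (q ^ S (S d)) q n)
    with (qpoch (q ^ S d) q n * (1 - q ^ S d * q ^ n) / (1 - q ^ S d))
    by (rewrite E; field; auto).
  replace (n + S d)%nat with (S (d + n)) by lia.
  rewrite !F_succ. replace (n * S d)%nat with (n * d + n)%nat by lia.
  simpl. rewrite !pow_add. pose proof one_minus_q_neq0.
  pose proof (pow_nonzero _ d phi_neq0). pose proof (pow_nonzero _ n phi_neq0).
  simpl in *. field. repeat split; auto.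
Qed.

(** * The explicit expansion *)

Lemma palpha_lqj_coef a n x :
  palpha (S a) n x = fibonomial (a + n) n
    * sum_f_R0 (fun k => lqj_coef q (q ^ S a) n k * (x * phi * q) ^ k) n.
Proof.
  unfold palpha. replace (S a + n - 1)%nat with (a + n)%nat by lia.
  rewrite little_qjacobi_b1.
  replace (q ^ (S a - 1) * q) with (q ^ S a) by (simpl; rewrite Nat.sub_0_r; ring).
  reflexivity.
Qed.

Lemma lqj_ratio_golden a k d :
  (1 - / q ^ (k + S d) * q ^ k) * (1 - q ^ S a * q ^ (k + S d) * q ^ k)
    / ((1 - q * q ^ k) * (1 - q ^ S a * q ^ k)) * (phi * q)
  = (-1) ^ S d * (F (S d) / F (S k)) * (F (k + S d + S (a + k)) / F (S (a + k))).
Proof.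
  pose proof q_neq0. pose proof phi_neq0. pose proof one_minus_q_neq0.
  assert (Hinv : / q = (-1) * (phi * phi)) by (rewrite q_eq_inv_phi_sq; field; auto).
  assert (Hphiq : phi * q = - / phi) by (rewrite q_eq_inv_phi_sq; field; auto).
  replace (/ q ^ (k + S d) * q ^ k) with (/ q ^ S d)
    by (rewrite pow_add; field; split; apply pow_nonzero; auto).
  replace (1 - / q ^ S d) with (- (/ q) ^ S d * (1 - q ^ S d))
    by (rewrite pow_inv; field; apply pow_nonzero; auto).
  rewrite Hinv, Hphiq, Rpow_mult_distr.
  replace (k + S d + S (a + k))%nat with (S (k + S d + a + k)) by lia.
  rewrite !F_succ.
  pose proof (one_minus_neq0 _ (Rabs_pow_succ_lt1 q k Rabs_q_lt1)).
  pose proof (one_minus_neq0 _ (Rabs_pow_succ_lt1 q (a + k) Rabs_q_lt1)).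
  pose proof (one_minus_neq0 _ (Rabs_pow_succ_lt1 q d Rabs_q_lt1)).
  pose proof (pow_nonzero _ d phi_neq0). pose proof (pow_nonzero _ a phi_neq0).
  pose proof (pow_nonzero _ k phi_neq0).
  simpl in *. rewrite !pow_add in *. simpl in *. rewrite ?pow_add, ?Rpow_mult_distr in *.
  field. repeat split; auto.
Qed.

Lemma sign_exponent_succ n k : (k < n)%nat ->
  (-1) ^ (S k * n - S k * (S k - 1) / 2) = (-1) ^ (k * n - k * (k - 1) / 2) * (-1) ^ (n - k).
Proof.
  intro Hk.
  assert (E : (S k * (S k - 1) / 2 = k * (k - 1) / 2 + k)%nat).
  { replace (S k * (S k - 1))%nat with (k * (k - 1) + k * 2)%nat
      by (destruct k; simpl; nia).
    now rewrite Nat.div_add by lia. }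
  rewrite E, <- pow_add. f_equal.
  pose proof (Nat.Div0.mul_div_le (k * (k - 1)) 2).
  assert (k * (k - 1) <= k * n)%nat by (apply Nat.mul_le_mono_l; lia).
  nia.
Qed.

Lemma palpha_coef a n k : (k <= n)%nat ->
  fibonomial (a + n) n * lqj_coef q (q ^ S a) n k * (phi * q) ^ k
  = (-1) ^ (k * n - k * (k - 1) / 2) * fibonomial n k * fibonomial (a + n + k) n.
Proof.
  induction k as [|k IH]; intro Hk.
  - unfold lqj_coef. simpl. rewrite Nat.add_0_r. field.
  - destruct (Nat.le_exists_sub (S k) n Hk) as [d [Hd _]].
    replace n with (k + S d)%nat in * by lia. clear Hd.
    rewrite (lqj_coef_succ q q_neq0 Rabs_q_lt1) by (apply Rabs_pow_succ_lt1, Rabs_q_lt1).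
    transitivity (fibonomial (a + (k + S d)) (k + S d) * lqj_coef q (q ^ S a) (k + S d) k
                  * (phi * q) ^ k
      * ((1 - / q ^ (k + S d) * q ^ k) * (1 - q ^ S a * q ^ (k + S d) * q ^ k)
         / ((1 - q * q ^ k) * (1 - q ^ S a * q ^ k)) * (phi * q))); [simpl; ring |].
    rewrite IH, lqj_ratio_golden, sign_exponent_succ by lia.
    change (fibonomial (k + S d) (S k))
      with (fibonomial (k + S d) k * (F (k + S d - k) / F (S k))).
    replace (k + S d - k)%nat with (S d) by lia.
    replace (a + (k + S d) + S k)%nat with (k + S d + S (a + k))%nat by lia.
    replace (a + (k + S d) + k)%nat with (k + S d + (a + k))%nat by lia.
    rewrite (fibonomial_shift (k + S d) (a + k)). ring.
Qed.

Lemma palpha_expansion a n x :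
  palpha (S a) n x = sum_f_R0 (fun k => (-1) ^ (k * n - k * (k - 1) / 2)
                       * fibonomial n k * fibonomial (S a + n + k - 1) n * x ^ k) n.
Proof.
  rewrite palpha_lqj_coef, scal_sum. apply sum_eq. intros k Hk.
  replace (S a + n + k - 1)%nat with (a + n + k)%nat by lia.
  rewrite <- palpha_coef by exact Hk.
  replace (x * phi * q) with (phi * q * x) by ring. rewrite Rpow_mult_distr. ring.
Qed.

(** * Orthogonality *)

Lemma is_mu_integral_ext alpha f g v :
  (forall x, f x = g x) -> is_mu_integral alpha f v -> is_mu_integral alpha g v.
Proof.
  intros E H. apply (is_series_ext _ _ _ (fun k => f_equal _ (E (mu_point k))) H).
Qed.

Lemma is_mu_integral_scal alpha c f v :
  is_mu_integral alpha f v -> is_mu_integral alpha (fun x => c * f x) (c * v).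
Proof.
  intro H. eapply is_series_ext; [| exact (is_series_scal_l c _ _ H)].
  intro k. cbn. ring.
Qed.

Lemma is_mu_integral_sum alpha (f : nat -> R -> R) (v : nat -> R) N :
  (forall k, (k <= N)%nat -> is_mu_integral alpha (f k) (v k)) ->
  is_mu_integral alpha (fun x => sum_f_R0 (fun k => f k x) N) (sum_f_R0 v N).
Proof.
  induction N as [|N IH]; intro H; [apply H; lia |].
  pose proof (is_series_plus _ _ _ _ (IH (fun k Hk => H k ltac:(lia))) (H (S N) (le_n _))) as HS.
  eapply is_series_ext; [| exact HS]. intro k. cbn. ring.
Qed.

(* At the atoms [x = q^s / phi] of [mu_(a+1)], [x phi q = q^(s+1)]: moments are geometric series. *)
Lemma is_mu_integral_monomial a j :
  is_mu_integral (S a) (fun x => (x * phi * q) ^ j)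
    ((1 - q ^ S a) * q ^ j / (1 - q ^ S a * q ^ j)).
Proof.
  assert (Hr : Rabs (q ^ S a * q ^ j) < 1)
    by (apply Rabs_mul_pow_lt1; [apply Rabs_pow_succ_lt1 |]; apply Rabs_q_lt1).
  eapply is_series_ext;
    [| exact (is_series_scal_l ((1 - q ^ S a) * q ^ j) _ _ (is_series_geom _ Hr))].
  intro s. cbn -[pow]. unfold mu_weight, mu_point.
  replace (q ^ s / phi * phi * q) with (q * q ^ s) by (field; exact phi_neq0).
  rewrite !Rpow_mult_distr, <- !pow_mult, (Nat.mul_comm s j). ring.
Qed.

Definition palpha_moment (a n l : nat) : R :=
  fibonomial (a + n) n * (1 - q ^ S a) * q ^ l
  * (qpoch (/ q ^ l) q n / qpoch (q ^ S a) q n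
     * ((q ^ S a * q ^ l) ^ n * qpoch q q n / qpoch (q ^ S a * q ^ l) q (S n))).

Lemma is_mu_integral_monomial_palpha a n l :
  is_mu_integral (S a) (fun x => (x * phi * q) ^ l * palpha (S a) n x) (palpha_moment a n l).
Proof.
  set (u := q ^ S a). set (B := fibonomial (a + n) n).
  assert (Hu : Rabs u < 1) by apply Rabs_pow_succ_lt1, Rabs_q_lt1.
  assert (Hu0 : u <> 0) by apply pow_nonzero, q_neq0.
  assert (H : is_mu_integral (S a)
                (fun x => sum_f_R0 (fun k => B * lqj_coef q u n k * (x * phi * q) ^ (l + k)) n)
                (sum_f_R0 (fun k => B * lqj_coef q u n k
                                    * ((1 - u) * q ^ (l + k) / (1 - u * q ^ (l + k)))) n)).
  { apply is_mu_integral_sum. intros k _. apply is_mu_integral_scal, is_mu_integral_monomial. }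
  replace (palpha_moment a n l) with
    (sum_f_R0 (fun k => B * lqj_coef q u n k * ((1 - u) * q ^ (l + k) / (1 - u * q ^ (l + k)))) n).
  - refine (is_mu_integral_ext _ _ _ _ _ H). intro x.
    rewrite palpha_lqj_coef, scal_sum, scal_sum. fold u B. apply sum_eq. intros k _.
    rewrite pow_add. ring.
  - unfold palpha_moment. fold u B.
    rewrite <- (sum_lqj_coef_moment q q_neq0 Rabs_q_lt1 u n l Hu0 Hu), scal_sum.
    apply sum_eq. intros k _. rewrite pow_add, <- (Rmult_assoc u). unfold Rdiv. ring.
Qed.

Lemma palpha_moment_lt a n l : (l < n)%nat -> palpha_moment a n l = 0.
Proof.
  intro Hl. unfold palpha_moment.
  rewrite (qpoch_eq0 _ _ _ l Hl) by (field; apply pow_nonzero, q_neq0).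
  unfold Rdiv. ring.
Qed.

Lemma palpha_moment_diag a n :
  fibonomial (a + n) n * lqj_coef q (q ^ S a) n n * palpha_moment a n n
  = (-1) ^ (S a * n) * F (S a) / F (S a + 2 * n).
Proof.
  unfold palpha_moment, lqj_coef. set (u := q ^ S a).
  set (B := fibonomial (a + n) n). set (D := qpoch (/ q ^ n) q n).
  set (U := qpoch u q n). set (Q := qpoch q q n). set (W := qpoch (u * q ^ n) q n).
  assert (Hu : Rabs u < 1) by apply Rabs_pow_succ_lt1, Rabs_q_lt1.
  assert (HuN : Rabs (u * q ^ n * q ^ n) < 1)
    by (rewrite Rmult_assoc, <- pow_add; apply Rabs_mul_pow_lt1; auto; apply Rabs_q_lt1).
  pose proof (qpoch_q_neq0 u n Hu) as NU. pose proof (qpoch_q_neq0 q n Rabs_q_lt1) as NQ.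
  pose proof (qpoch_q_neq0 (u * q ^ n) n (Rabs_mul_pow_lt1 _ _ _ Hu Rabs_q_lt1)) as NW.
  fold U in NU. fold Q in NQ. fold W in NW.
  pose proof (one_minus_neq0 _ Hu). pose proof (one_minus_neq0 _ HuN).
  pose proof (pow_nonzero _ n q_neq0).
  change (qpoch (u * q ^ n) q (S n)) with (W * (1 - u * q ^ n * q ^ n)).
  transitivity (B * B * (1 - u) * u ^ n / (U * U * (1 - u * q ^ n * q ^ n))
                * (D ^ 2 * q ^ (n * S n))).
  { replace (n * S n)%nat with (n * n + n)%nat by lia.
    rewrite pow_add, pow_mult, Rpow_mult_distr. field. repeat split; auto. }
  replace (D ^ 2 * q ^ (n * S n)) with (Q ^ 2) by (symmetry; apply qpoch_inv_pow_sq, q_neq0).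
  assert (HB : B = phi ^ (n * a) * U / Q).
  { unfold B. rewrite Nat.add_comm. apply (Rmult_eq_reg_r Q); auto.
    rewrite fibonomial_qpoch. fold u U. field. auto. }
  assert (Hsign : (-1) ^ (S a * n) = u ^ n * (phi ^ (n * a) * phi ^ (n * a) * phi ^ n * phi ^ n)).
  { rewrite <- q_mul_phi_sq, !Rpow_mult_distr. unfold u. rewrite <- pow_mult.
    replace (S a * n)%nat with (n * a + n)%nat by lia. rewrite !pow_add. ring. }
  replace (S a + 2 * n)%nat with (S (a + n + n)) by lia.
  rewrite HB, Hsign, !F_succ. unfold u in *. simpl in *. rewrite !pow_add.
  pose proof one_minus_q_neq0. pose proof (pow_nonzero _ a phi_neq0).
  pose proof (pow_nonzero _ n phi_neq0). pose proof (pow_nonzero _ (n * a) phi_neq0).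
  field. repeat split; auto. now rewrite <- !Rmult_assoc.
Qed.

(* Expand [p_m] in monomials [x^l], [l <= m]; all of them but [x^n] are orthogonal to [p_n]. *)
Lemma is_mu_integral_palpha_mul_le a n m : (m <= n)%nat ->
  is_mu_integral (S a) (fun x => palpha (S a) n x * palpha (S a) m x)
    (if Nat.eq_dec n m then (-1) ^ (S a * n) * F (S a) / F (S a + 2 * n) else 0).
Proof.
  intro Hmn. set (c l := fibonomial (a + m) m * lqj_coef q (q ^ S a) m l).
  assert (H : is_mu_integral (S a)
                (fun x => sum_f_R0 (fun l => c l * ((x * phi * q) ^ l * palpha (S a) n x)) m)
                (sum_f_R0 (fun l => c l * palpha_moment a n l) m)).
  { apply is_mu_integral_sum. intros l _.
    apply is_mu_integral_scal, is_mu_integral_monomial_palpha. }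
  replace (if Nat.eq_dec n m then _ else 0) with (sum_f_R0 (fun l => c l * palpha_moment a n l) m).
  - refine (is_mu_integral_ext _ _ _ _ _ H). intro x.
    rewrite (palpha_lqj_coef a m x), !scal_sum. apply sum_eq. intros l _. unfold c. ring.
  - destruct (Nat.eq_dec n m) as [<- | Hne].
    + rewrite sum_f_R0_last, <- palpha_moment_diag; [reflexivity |].
      intros l Hl. rewrite palpha_moment_lt by exact Hl. ring.
    + apply sum_eq_R0. intros l Hl. rewrite palpha_moment_lt by lia. ring.
Qed.

Lemma is_mu_integral_palpha_mul a n m :
  is_mu_integral (S a) (fun x => palpha (S a) n x * palpha (S a) m x)
    (if Nat.eq_dec n m then (-1) ^ (S a * n) * F (S a) / F (S a + 2 * n) else 0).
Proof.
  destruct (Nat.le_gt_cases m n) as [Hmn | Hnm]; [now apply is_mu_integral_palpha_mul_le |].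
  pose proof (is_mu_integral_palpha_mul_le a m n ltac:(lia)) as H.
  destruct (Nat.eq_dec m n), (Nat.eq_dec n m); try lia.
  refine (is_mu_integral_ext _ _ _ _ _ H). intro x. ring.
Qed.

(** * Orthonormality *)

Lemma sum_n_RtoC (a : nat -> R) N :
  @sum_n C_AbelianMonoid (fun k => RtoC (a k)) N = RtoC (sum_n a N).
Proof.
  induction N as [|N IH]; [now rewrite !sum_O |].
  rewrite !sum_Sn, IH. symmetry. apply RtoC_plus.
Qed.

Lemma filterlim_RtoC l : filterlim RtoC (locally l) (@locally C_UniformSpace (RtoC l)).
Proof.
  apply filterlim_locally. intro eps. exists eps. intros y Hy. split; [exact Hy |].
  change (Rabs (0 - 0) < eps). rewrite Rminus_0_r, Rabs_R0. apply cond_pos.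
Qed.

Lemma is_series_RtoC (a : nat -> R) l :
  is_series a l -> @is_series C_AbsRing C_NormedModule (fun k => RtoC (a k)) (RtoC l).
Proof.
  intro H. unfold is_series in *.
  eapply filterlim_ext; [intro N; symmetry; apply sum_n_RtoC |].
  eapply filterlim_comp; [exact H | apply filterlim_RtoC].
Qed.

Lemma is_mu_integralC_of_real alpha (c : C) f g v :
  (forall x, g x = Cmult c (RtoC (f x))) ->
  is_mu_integral alpha f v -> is_mu_integralC alpha g (Cmult c (RtoC v)).
Proof.
  intros E H. unfold is_mu_integralC.
  eapply is_series_ext; [| exact (is_series_scal_l c _ _ (is_series_RtoC _ _ H))].
  intro k. cbn -[Cmult RtoC]. rewrite E, RtoC_mult. ring.
Qed.

Lemma csqrt_principal_sq t : Cmult (csqrt_principal t) (csqrt_principal t) = RtoC t.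
Proof.
  unfold csqrt_principal, Cmult, RtoC. destruct (Rle_dec 0 t); simpl; f_equal; try ring.
  - now rewrite Rmult_0_r, Rminus_0_r, sqrt_sqrt.
  - rewrite Rmult_0_r, Rminus_0_l, sqrt_sqrt by lra. ring.
Qed.

Lemma is_mu_integralC_Palpha_mul a n m :
  is_mu_integralC (S a) (fun x => Cmult (Palpha (S a) n x) (Palpha (S a) m x))
    (if Nat.eq_dec n m then RtoC 1 else RtoC 0).
Proof.
  set (s k := csqrt_principal ((-1) ^ (S a * k) * F (S a + 2 * k) / F (S a))).
  assert (E : forall x, Cmult (Palpha (S a) n x) (Palpha (S a) m x)
                        = Cmult (Cmult (s n) (s m)) (RtoC (palpha (S a) n x * palpha (S a) m x)))
    by (intro x; unfold Palpha, s; rewrite RtoC_mult; ring).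
  pose proof (is_mu_integralC_of_real _ _ _ _ _ E (is_mu_integral_palpha_mul a n m)) as H.
  destruct (Nat.eq_dec n m) as [<- | _].
  - unfold s in H. rewrite csqrt_principal_sq, <- RtoC_mult in H.
    replace (S a + 2 * n)%nat with (S (a + 2 * n)) in H by lia.
    pose proof (F_succ_neq0 a). pose proof (F_succ_neq0 (a + 2 * n)).
    assert (Hsq : (-1) ^ (S a * n) * (-1) ^ (S a * n) = 1)
      by (rewrite <- Rpow_mult_distr, <- (pow1 (S a * n)); f_equal; ring).
    replace 1 with ((-1) ^ (S a * n) * F (S (a + 2 * n)) / F (S a)
                    * ((-1) ^ (S a * n) * F (S a) / F (S (a + 2 * n))))
      by (rewrite <- Hsq; field; auto).
    exact H.
  - rewrite Cmult_0_r in H. exact H.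
Qed.

Theorem theorem3p1 (alpha : nat) (Halpha : (1 <= alpha)%nat) :
  (forall (n : nat) (x : R),
      palpha alpha n x =
      sum_f_R0 (fun k => (-1) ^ (k * n - k * (k - 1) / 2)
                         * fibonomial n k * fibonomial (alpha + n + k - 1) n
                         * x ^ k) n)
  /\
  (forall n m : nat,
      is_mu_integral alpha (fun x => palpha alpha n x * palpha alpha m x)
        (if Nat.eq_dec n m
         then (-1) ^ (alpha * n) * F alpha / F (alpha + 2 * n)
         else 0))
  /\
  (forall n m : nat,
      is_mu_integralC alpha (fun x => Cmult (Palpha alpha n x) (Palpha alpha m x))
        (if Nat.eq_dec n m then RtoC 1 else RtoC 0)).
Proof.
  destruct alpha as [|a]; [lia |].
  split; [| split].
  - apply palpha_expansion.
  - apply is_mu_integral_palpha_mul.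
  - apply is_mu_integralC_Palpha_mul.
Qed.
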